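(* Let $\hat q_1,\hat q_2,g_1,g_2$ be smooth complex-valued functions of $(\xi,\eta,t)$. Consider the overdetermined linear system for the unknown functions $\psi=\psi(\xi,\eta,t)$, $\varphi=\varphi(\xi,\eta,t)$: \[ \psi_{\xi}=-\tfrac12\hat q_1\varphi,\qquad \varphi_{\eta}=-\tfrac12\hat q_2\psi, \] \[ i\psi_{t}=\psi_{\xi\xi}-\psi_{\eta\eta}-g_1\psi+\hat q_{1,\xi}\varphi,\qquad i\varphi_{t}=\varphi_{\xi\xi}-\varphi_{\eta\eta}+g_2\varphi-\hat q_{2,\eta}\psi . \] This system is consistent (i.e. the cross-differentiation conditions $(\psi_\xi)_t=(\psi_t)_\xi$ and $(\varphi_\eta)_t=(\varphi_t)_\eta$ hold identically by virtue of the system) if and only if \[ i\hat q_{1,t}+\hat q_{1,\xi\xi}+\hat q_{1,\eta\eta}+\hat q_1(g_1+g_2)=0,\qquad -i\hat q_{2,t}+\hat q_{2,\xi\xi}+\hat q_{2,\eta\eta}+\hat q_2(g_1+g_2)=0, \] \[ \frac{\partial g_1}{\partial\xi}=-\frac12\frac{\partial}{\partial\eta}(\hat q_1\hat q_2),\qquad \frac{\partial g_2}{\partial\eta}=-\frac12\frac{\partial}{\partial\xi}(\hat q_1\hat q_2). \]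
   Context: Subscripts denote partial derivatives. In the paper this system is written for every integer $n$ with $\psi=\psi_{2n-1}$, $\varphi=\varphi_{2n}$, $\hat q_j=\hat q_j(n)$, $g_j=g_j(n)$; the statement holds for each $n$ separately, so the index is suppressed here. *)

From Stdlib Require Import Reals List.
From Coquelicot Require Import Coquelicot.

Open Scope C_scope.

(** Complex-valued functions of (xi, eta, t), curried. *)
Definition fn3 := R -> R -> R -> C.

(** Derivative of a C-valued function of one real variable, computed
    componentwise (it is the genuine derivative whenever it exists). *)
Definition derC (f : R -> C) (s : R) : C :=
  (Derive (fun u => fst (f u)) s, Derive (fun u => snd (f u)) s).

Definition ex_derC (f : R -> C) (s : R) : Prop :=
  ex_derive (fun u => fst (f u)) s /\ ex_derive (fun u => snd (f u)) s.

Inductive dir := Dxi | Deta | Dt.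

Definition restrict (d : dir) (F : fn3) (x y t : R) : R -> C :=
  match d with
  | Dxi => fun s => F s y t
  | Deta => fun s => F x s t
  | Dt => fun s => F x y s
  end.

Definition coord (d : dir) (x y t : R) : R :=
  match d with Dxi => x | Deta => y | Dt => t end.

Definition dpart (d : dir) (F : fn3) : fn3 :=
  fun x y t => derC (restrict d F x y t) (coord d x y t).

Definition d_xi := dpart Dxi.
Definition d_eta := dpart Deta.
Definition d_t := dpart Dt.

Fixpoint dparts (l : list dir) (F : fn3) : fn3 :=
  match l with nil => F | d :: l' => dpart d (dparts l' F) end.

Definition uncurry3 (F : fn3) : R * R * R -> C :=
  fun p => F (fst (fst p)) (snd (fst p)) (snd p).

Definition smooth3 (F : fn3) : Prop :=
  forall l : list dir,
    (forall (p : R * R * R), continuous (uncurry3 (dparts l F)) p) /\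
    (forall d x y t, ex_derC (restrict d (dparts l F) x y t) (coord d x y t)).

(** Free (parametric) jet coordinates of the unknowns psi, phi at a point:
    after using the system, every derivative of psi containing d/dxi, every
    derivative of phi containing d/deta, and every t-derivative is expressed
    through these. *)
Record jet := mkJet {
  j_psi : C; j_psi_e : C; j_psi_ee : C;
  j_phi : C; j_phi_x : C; j_phi_xx : C
}.

Definition half : C := RtoC (/ 2).

(** Compatibility defect of (psi_xi)_t = (psi_t)_xi, after substituting the
    system and its differential consequences, at the point (x,y,t) and jet J.
    Notation: q = hat q_1, p = hat q_2. *)
Definition defect1 (q p g1 g2 : fn3) (x y t : R) (J : jet) : C :=
  let psi := j_psi J in let psi_e := j_psi_e J in
  let phi := j_phi J in let phi_x := j_phi_x J in let phi_xx := j_phi_xx J in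
  let q0 := q x y t in let p0 := p x y t in
  let q_x := d_xi q x y t in let q_xx := d_xi (d_xi q) x y t in
  let q_e := d_eta q x y t in let q_ee := d_eta (d_eta q) x y t in
  let q_t := d_t q x y t in
  let p_e := d_eta p x y t in
  let g1_0 := g1 x y t in let g1_x := d_xi g1 x y t in let g2_0 := g2 x y t in
  let phi_e := - half * p0 * psi in
  let phi_ee := - half * (p_e * psi + p0 * psi_e) in
  (* phi_t from the fourth equation *)
  let phi_t := - Ci * (phi_xx - phi_ee + g2_0 * phi - p_e * psi) in
  let psi_x := - half * q0 * phi in
  let psi_xxx := - half * (q_xx * phi + (RtoC 2) * q_x * phi_x + q0 * phi_xx) in
  let psi_eex := - half * (q_ee * phi + (RtoC 2) * q_e * phi_e + q0 * phi_ee) in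
  (* (psi_xi)_t, differentiating psi_xi = -1/2 q phi in t *)
  let lhs := - half * (q_t * phi + q0 * phi_t) in
  (* (psi_t)_xi, differentiating the third equation in xi *)
  let rhs := - Ci * (psi_xxx - psi_eex - g1_x * psi - g1_0 * psi_x
                     + q_xx * phi + q_x * phi_x) in
  lhs - rhs.

(** Compatibility defect of (phi_eta)_t = (phi_t)_eta. *)
Definition defect2 (q p g1 g2 : fn3) (x y t : R) (J : jet) : C :=
  let psi := j_psi J in let psi_e := j_psi_e J in let psi_ee := j_psi_ee J in
  let phi := j_phi J in let phi_x := j_phi_x J in
  let q0 := q x y t in let p0 := p x y t in
  let q_x := d_xi q x y t in
  let p_x := d_xi p x y t in let p_xx := d_xi (d_xi p) x y t in
  let p_e := d_eta p x y t in let p_ee := d_eta (d_eta p) x y t in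
  let p_t := d_t p x y t in
  let g1_0 := g1 x y t in let g2_0 := g2 x y t in let g2_e := d_eta g2 x y t in
  let psi_x := - half * q0 * phi in
  let psi_xx := - half * (q_x * phi + q0 * phi_x) in
  (* psi_t from the third equation *)
  let psi_t := - Ci * (psi_xx - psi_ee - g1_0 * psi + q_x * phi) in
  let phi_e := - half * p0 * psi in
  let phi_xxe := - half * (p_xx * psi + (RtoC 2) * p_x * psi_x + p0 * psi_xx) in
  let phi_eee := - half * (p_ee * psi + (RtoC 2) * p_e * psi_e + p0 * psi_ee) in
  (* (phi_eta)_t, differentiating phi_eta = -1/2 p psi in t *)
  let lhs := - half * (p_t * psi + p0 * psi_t) in
  (* (phi_t)_eta, differentiating the fourth equation in eta *)
  let rhs := - Ci * (phi_xxe - phi_eee + g2_e * phi + g2_0 * phi_e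
                     - p_ee * psi - p_e * psi_e) in
  lhs - rhs.

Definition consistent (q1 q2 g1 g2 : fn3) : Prop :=
  forall (x y t : R) (J : jet),
    defect1 q1 q2 g1 g2 x y t J = 0 /\ defect2 q1 q2 g1 g2 x y t J = 0.

Definition compat_conditions (q1 q2 g1 g2 : fn3) : Prop :=
  forall x y t : R,
    Ci * d_t q1 x y t + d_xi (d_xi q1) x y t + d_eta (d_eta q1) x y t
      + q1 x y t * (g1 x y t + g2 x y t) = 0 /\
    - Ci * d_t q2 x y t + d_xi (d_xi q2) x y t + d_eta (d_eta q2) x y t
      + q2 x y t * (g1 x y t + g2 x y t) = 0 /\
    d_xi g1 x y t = - half * d_eta (fun a b c => q1 a b c * q2 a b c) x y t /\
    d_eta g2 x y t = - half * d_xi (fun a b c => q1 a b c * q2 a b c) x y t.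

(** After the system is used to eliminate all dependent jet coordinates,
    each compatibility defect is a linear form in the two free values [phi]
    and [psi] alone: the terms in [phi_xi], [phi_xixi], [psi_eta] and
    [psi_etaeta] cancel identically.  Its coefficients are the left-hand
    sides of the four compatibility conditions (the mixed ones after the
    product rule for [q1 q2]) times the units [+-i/2] and [+-i].  Since
    [phi] and [psi] can be chosen freely, the defects vanish identically iff
    these coefficients vanish. *)
From Stdlib Require Import Reals List Lra.
From Coquelicot Require Import Coquelicot.
Open Scope C_scope.

Lemma derC_mult (f g : R -> C) (s : R) : ex_derC f s -> ex_derC g s ->
  derC (fun u => f u * g u) s = derC f s * g s + f s * derC g s.
Proof.
  intros [f1 f2] [g1 g2]; unfold derC.
  rewrite (Derive_ext (fun u => fst (f u * g u))
             (fun u => fst (f u) * fst (g u) - snd (f u) * snd (g u))%R)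
    by (intro; reflexivity).
  rewrite (Derive_ext (fun u => snd (f u * g u))
             (fun u => fst (f u) * snd (g u) + snd (f u) * fst (g u))%R)
    by (intro; reflexivity).
  rewrite Derive_minus, Derive_plus, !Derive_mult.
  - apply injective_projections; simpl; ring.
  all: try assumption; apply ex_derive_mult; assumption.
Qed.

Lemma dpart_mult (d : dir) (F G : fn3) (x y t : R) :
  ex_derC (restrict d F x y t) (coord d x y t) ->
  ex_derC (restrict d G x y t) (coord d x y t) ->
  dpart d (fun a b c => F a b c * G a b c) x y t
  = dpart d F x y t * G x y t + F x y t * dpart d G x y t.
Proof. intros HF HG; destruct d; exact (derC_mult _ _ _ HF HG). Qed.

Lemma smooth3_ex_derC {F : fn3} : smooth3 F ->
  forall d x y t, ex_derC (restrict d F x y t) (coord d x y t).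
Proof. intro S; exact (proj2 (S nil)). Qed.

Lemma Cmult_eq_0_l (c z : C) : c <> 0 -> (c * z = 0 <-> z = 0).
Proof.
  intro Hc; split; intro H.
  - replace z with (/ c * (c * z)) by (field; exact Hc).
    rewrite H; ring.
  - rewrite H; ring.
Qed.

Lemma Cim_neq_0 (z : C) : snd z <> 0%R -> z <> 0.
Proof. intros Hz ->; apply Hz; reflexivity. Qed.

Lemma add_half_eq_0 (a b : C) : a + half * b = 0 <-> a = - half * b.
Proof.
  split; intro H.
  - replace a with (a + half * b - half * b) by ring; rewrite H; ring.
  - rewrite H; ring.
Qed.

Lemma jet_linear_form_eq_0 (a b : C) :
  (forall J : jet, a * j_phi J + b * j_psi J = 0) <-> a = 0 /\ b = 0.
Proof.
  split.
  - intro H; split.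
    + rewrite <- (H (mkJet 0 0 0 1 0 0)); simpl; ring.
    + rewrite <- (H (mkJet 1 0 0 0 0 0)); simpl; ring.
  - intros [-> ->] J; ring.
Qed.

Lemma jet_linear_forms_eq_0 (a b c d : C) :
  (forall J : jet, a * j_phi J + b * j_psi J = 0 /\ c * j_phi J + d * j_psi J = 0)
  <-> (a = 0 /\ b = 0) /\ (c = 0 /\ d = 0).
Proof.
  split.
  - intro H; split; apply jet_linear_form_eq_0; intro J; apply H.
  - intros [Hab Hcd] J; split; revert J; apply jet_linear_form_eq_0; assumption.
Qed.

Ltac C_field :=
  unfold half; apply injective_projections;
  cbn [fst snd Cmult Cplus Cminus Copp RtoC Ci]; field.

Lemma defect1_linear (q p g1 g2 : fn3) (x y t : R) (J : jet) :
  defect1 q p g1 g2 x y t J =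
  Ci * half * (Ci * d_t q x y t + d_xi (d_xi q) x y t + d_eta (d_eta q) x y t
               + q x y t * (g1 x y t + g2 x y t)) * j_phi J
  + - Ci * (d_xi g1 x y t
            + half * (d_eta q x y t * p x y t + q x y t * d_eta p x y t))
    * j_psi J.
Proof. unfold defect1; cbv zeta; C_field. Qed.

Lemma defect2_linear (q p g1 g2 : fn3) (x y t : R) (J : jet) :
  defect2 q p g1 g2 x y t J =
  Ci * (d_eta g2 x y t
        + half * (d_xi q x y t * p x y t + q x y t * d_xi p x y t)) * j_phi J
  + - Ci * half * (- Ci * d_t p x y t + d_xi (d_xi p) x y t
                   + d_eta (d_eta p) x y t + p x y t * (g1 x y t + g2 x y t))
    * j_psi J.
Proof. unfold defect2; cbv zeta; C_field. Qed.

Theorem theorem3p2 (q1 q2 g1 g2 : fn3) :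
  smooth3 q1 -> smooth3 q2 -> smooth3 g1 -> smooth3 g2 ->
  (consistent q1 q2 g1 g2 <-> compat_conditions q1 q2 g1 g2).
Proof.
  intros S1 S2 _ _.
  pose proof (fun d x y t => dpart_mult d q1 q2 x y t
    (smooth3_ex_derC S1 d x y t) (smooth3_ex_derC S2 d x y t)) as product_rule.
  split; intros H x y t; generalize (H x y t); clear H;
    setoid_rewrite defect1_linear; setoid_rewrite defect2_linear;
    rewrite jet_linear_forms_eq_0, (product_rule Dxi), (product_rule Deta),
      !Cmult_eq_0_l, !add_half_eq_0
      by (apply Cim_neq_0; unfold half; simpl; lra);
    tauto.
Qed.
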